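(* Let $A=(-1,0)$ and $B=(1,0)$. For $x\in\mathbb{R}^2$ with $|x|=r>1$, define $P^2(x)$ by two steps on the origin-centered circle of radius $r$. First, $y$ is the second intersection point of the line $xA$ with this circle. Then $P^2(x)$ is the second intersection point of the line $yB$ with this circle. Let $\varphi_1$ be the time-$1$ flow of the vector field $Y=-\frac{4\sin\alpha}{r}\frac{\partial}{\partial\alpha}$, written in polar coordinates $(\alpha,r)$. Then there exist constants $R$ and $C_5$ such that $$|P^2(x)-\varphi_1(x)|\le\frac{C_5}{|x|}$$ for all $x$ with $|x|\ge R$.
   Context: The vector $\partial/\partial\alpha$ at a point at distance $r$ from the origin has Euclidean length $r$. *)

From Stdlib Require Import Reals Lra.
Open Scope R_scope.

Definition pt := (R * R)%type.

Definition padd (p q : pt) : pt := (fst p + fst q, snd p + snd q).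
Definition psub (p q : pt) : pt := (fst p - fst q, snd p - snd q).
Definition pscal (a : R) (p : pt) : pt := (a * fst p, a * snd p).
Definition pdot (p q : pt) : R := fst p * fst q + snd p * snd q.
Definition pnorm (p : pt) : R := sqrt (pdot p p).

Definition ptA : pt := (-1, 0).
Definition ptB : pt := (1, 0).

(* Second intersection point of the line through x and p with the
   origin-centred circle of radius |x| (which contains x).  Writing the line
   as x + t (p - x), the condition |x + t (p - x)|^2 = |x|^2 has the roots
   t = 0 (the point x) and t = -2 <x, p - x> / |p - x|^2 (the second point). *)
Definition second_intersection (x p : pt) : pt :=
  let d := psub p x in
  padd x (pscal (-2 * pdot x d / pdot d d) d).

Definition P2 (x : pt) : pt :=
  second_intersection (second_intersection x ptA) ptB.

(* Coordinate vector field d/dalpha of polar coordinates (alpha, r) at p: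
   p = (r cos a, r sin a) gives d/dalpha = (-r sin a, r cos a) = (-p2, p1),
   of Euclidean length r. *)
Definition d_alpha (p : pt) : pt := (- snd p, fst p).

(* Y = - (4 sin alpha / r) d/dalpha, with r = |p| and sin alpha = p2 / r. *)
Definition Yfield (p : pt) : pt :=
  let r := pnorm p in pscal (- (4 * (snd p / r)) / r) (d_alpha p).

Definition integral_curve (V : pt -> pt) (g1 g2 : R -> R) : Prop :=
  forall t : R,
    derivable_pt_lim g1 t (fst (V (g1 t, g2 t))) /\
    derivable_pt_lim g2 t (snd (V (g1 t, g2 t))).

(* Both P^2(x) and phi_1(x) agree with the Euler step x + Y(x) up to O(1/|x|),
   measured in the sup norm.  On the circle |p| = r the field Y is the quadratic
   map (4 p2^2, -4 p1 p2) / r^2, bounded by 4 and (8/r)-Lipschitz.  Reflecting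
   through A sends x to -x - Y(x)/2 + O(1/r); since B = -A, the second
   reflection is the first one conjugated by p |-> -p, so with y the first
   image, P^2(x) = x + Y(x)/2 + Y(-y)/2 + O(1/r) where -y = x + O(1), i.e.
   P^2(x) = x + Y(x) + O(1/r).  The field Y is tangent to the circles, so its
   flow stays on |p| = r and moves by at most 4 in unit time; hence along the
   flow the velocity stays within O(1/r) of Y(x). *)

From Stdlib Require Import Reals Lra.
From Coquelicot Require Import Rcomplements.
Open Scope R_scope.

Lemma Rabs_div_le (n d a : R) : 0 < d -> Rabs n <= a * d -> Rabs (n / d) <= a.
Proof.
  intros Hd Hn. rewrite Rabs_div, (Rabs_right d) by lra.
  apply Rle_div_l; lra.
Qed.

Definition supnorm (p : pt) : R := Rmax (Rabs (fst p)) (Rabs (snd p)).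

Lemma supnorm_le (p : pt) (e : R) :
  Rabs (fst p) <= e -> Rabs (snd p) <= e -> supnorm p <= e.
Proof. exact (Rmax_lub _ _ e). Qed.

Lemma Rabs_fst_le_supnorm (p : pt) : Rabs (fst p) <= supnorm p.
Proof. apply Rmax_l. Qed.

Lemma Rabs_snd_le_supnorm (p : pt) : Rabs (snd p) <= supnorm p.
Proof. apply Rmax_r. Qed.

Lemma supnorm_le_iff (p : pt) (e : R) :
  supnorm p <= e <-> (- e <= fst p <= e) /\ (- e <= snd p <= e).
Proof.
  rewrite <- !Rabs_le_between. split.
  - intros H. split; eapply Rle_trans; [apply Rmax_l | exact H | apply Rmax_r | exact H].
  - intros [H1 H2]. exact (Rmax_lub _ _ e H1 H2).
Qed.

Lemma pnorm_sqr (p : pt) : pnorm p ^ 2 = fst p ^ 2 + snd p ^ 2.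
Proof.
  unfold pnorm, pdot. rewrite <- Rsqr_pow2, Rsqr_sqrt by nra. ring.
Qed.

Lemma pnorm_opp (p : pt) : pnorm (pscal (-1) p) = pnorm p.
Proof. unfold pnorm, pdot, pscal; cbn [fst snd]. f_equal; ring. Qed.

Lemma pnorm_ptA : pnorm ptA = 1.
Proof.
  unfold pnorm, pdot, ptA; cbn [fst snd].
  replace (-1 * -1 + 0 * 0) with 1 by ring. apply sqrt_1.
Qed.

Lemma supnorm_le_pnorm (p : pt) : supnorm p <= pnorm p.
Proof.
  assert (Hr : 0 <= pnorm p) by apply sqrt_pos.
  pose proof (pnorm_sqr p).
  apply supnorm_le; apply Rabs_le; nra.
Qed.

Lemma pnorm_le_2supnorm (p : pt) : pnorm p <= 2 * supnorm p.
Proof.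
  pose proof (Rabs_fst_le_supnorm p) as H1; pose proof (Rabs_snd_le_supnorm p) as H2.
  rewrite Rabs_le_between in H1, H2.
  assert (0 <= supnorm p) by (eapply Rle_trans; [apply Rabs_pos | exact (Rabs_fst_le_supnorm p)]).
  unfold pnorm, pdot. rewrite <- (sqrt_pow2 (2 * supnorm p)) by lra.
  apply sqrt_le_1_alt. nra.
Qed.

Lemma supnorm_psub_triangle (p q s : pt) :
  supnorm (psub p q) <= supnorm (psub p s) + supnorm (psub s q).
Proof.
  pose proof (Rabs_fst_le_supnorm (psub p s)); pose proof (Rabs_snd_le_supnorm (psub p s)).
  pose proof (Rabs_fst_le_supnorm (psub s q)); pose proof (Rabs_snd_le_supnorm (psub s q)).
  destruct p as [p1 p2], q as [q1 q2], s as [s1 s2]; unfold psub in *; cbn [fst snd] in *.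
  apply supnorm_le; cbn [fst snd].
  - replace (p1 - q1) with ((p1 - s1) + (s1 - q1)) by ring.
    eapply Rle_trans; [apply Rabs_triang | lra].
  - replace (p2 - q2) with ((p2 - s2) + (s2 - q2)) by ring.
    eapply Rle_trans; [apply Rabs_triang | lra].
Qed.

Lemma supnorm_psub_comm (p q : pt) : supnorm (psub p q) = supnorm (psub q p).
Proof.
  unfold supnorm, psub; cbn [fst snd].
  rewrite (Rabs_minus_sym (fst p)), (Rabs_minus_sym (snd p)). reflexivity.
Qed.

Definition Ycircle (r : R) (p : pt) : pt :=
  (4 * snd p ^ 2 / r ^ 2, - 4 * fst p * snd p / r ^ 2).

Lemma Yfield_circle (r : R) (p : pt) :
  0 < r -> pnorm p = r -> Yfield p = Ycircle r p.
Proof.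
  intros Hr Hp. unfold Yfield, Ycircle, pscal, d_alpha. rewrite Hp.
  cbn [fst snd]. f_equal; field; lra.
Qed.

Lemma Ycircle_bound (r : R) (p : pt) :
  0 < r -> supnorm p <= r -> supnorm (Ycircle r p) <= 4.
Proof.
  intros Hr Hp.
  pose proof (Rabs_fst_le_supnorm p) as H1; pose proof (Rabs_snd_le_supnorm p) as H2.
  destruct p as [p1 p2]; cbn [fst snd] in H1, H2.
  assert (B1 : - r <= p1 <= r) by (apply Rabs_le_between; lra).
  assert (B2 : - r <= p2 <= r) by (apply Rabs_le_between; lra).
  apply supnorm_le; unfold Ycircle; cbn [fst snd];
    apply Rabs_div_le; try (apply pow_lt; lra);
    apply Rabs_le; nra.
Qed.

Lemma Ycircle_lipschitz (r : R) (p q : pt) :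
  0 < r -> supnorm p <= r -> supnorm q <= r ->
  supnorm (psub (Ycircle r p) (Ycircle r q)) <= 8 / r * supnorm (psub p q).
Proof.
  intros Hr Hp Hq.
  pose proof (Rabs_fst_le_supnorm p); pose proof (Rabs_snd_le_supnorm p).
  pose proof (Rabs_fst_le_supnorm q); pose proof (Rabs_snd_le_supnorm q).
  pose proof (Rabs_fst_le_supnorm (psub p q)); pose proof (Rabs_snd_le_supnorm (psub p q)).
  set (s := supnorm (psub p q)) in *.
  destruct p as [p1 p2], q as [q1 q2]; unfold psub in *; cbn [fst snd] in *.
  assert (0 <= s) by (eapply Rle_trans; [apply Rabs_pos | eassumption]).
  apply supnorm_le; unfold Ycircle; cbn [fst snd].
  - replace (4 * p2 ^ 2 / r ^ 2 - 4 * q2 ^ 2 / r ^ 2)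
      with (4 * ((p2 - q2) * (p2 + q2)) / r ^ 2) by (field; lra).
    apply Rabs_div_le; [apply pow_lt; lra|].
    rewrite Rabs_mult, Rabs_mult, (Rabs_right 4) by lra.
    pose proof (Rabs_triang p2 q2).
    assert (Rabs (p2 - q2) * Rabs (p2 + q2) <= s * (2 * r))
      by (apply Rmult_le_compat; try apply Rabs_pos; lra).
    replace (8 / r * s * r ^ 2) with (4 * (s * (2 * r))) by (field; lra).
    lra.
  - replace (- 4 * p1 * p2 / r ^ 2 - - 4 * q1 * q2 / r ^ 2)
      with (- 4 * ((p1 - q1) * p2 + q1 * (p2 - q2)) / r ^ 2) by (field; lra).
    apply Rabs_div_le; [apply pow_lt; lra|].
    rewrite Rabs_mult, (Rabs_left (-4)) by lra.
    pose proof (Rabs_triang ((p1 - q1) * p2) (q1 * (p2 - q2))).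
    rewrite !Rabs_mult in *.
    assert (Rabs (p1 - q1) * Rabs p2 <= s * r)
      by (apply Rmult_le_compat; try apply Rabs_pos; lra).
    assert (Rabs q1 * Rabs (p2 - q2) <= r * s)
      by (apply Rmult_le_compat; try apply Rabs_pos; lra).
    replace (8 / r * s * r ^ 2) with (4 * (2 * s * r)) by (field; lra).
    lra.
Qed.

Lemma pnorm_second_intersection (x p : pt) :
  p <> x -> pnorm (second_intersection x p) = pnorm x.
Proof.
  intros Hpx. unfold pnorm. f_equal.
  destruct x as [x1 x2], p as [p1 p2].
  assert (Hd : (p1 - x1) * (p1 - x1) + (p2 - x2) * (p2 - x2) <> 0).
  { intro E. apply Hpx. destruct (Rplus_sqr_eq_0 _ _ E). f_equal; lra. }
  unfold second_intersection, padd, pscal, psub, pdot; cbn [fst snd].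
  field; exact Hd.
Qed.

Lemma second_intersection_opp (x p : pt) :
  second_intersection (pscal (-1) x) (pscal (-1) p) = pscal (-1) (second_intersection x p).
Proof.
  destruct x as [x1 x2], p as [p1 p2].
  unfold second_intersection.
  replace (psub (pscal (-1) (p1, p2)) (pscal (-1) (x1, x2)))
    with (pscal (-1) (psub (p1, p2) (x1, x2))) by (unfold pscal, psub; cbn; f_equal; ring).
  set (d := psub (p1, p2) (x1, x2)).
  replace (pdot (pscal (-1) (x1, x2)) (pscal (-1) d)) with (pdot (x1, x2) d)
    by (unfold pdot, pscal; cbn; ring).
  replace (pdot (pscal (-1) d) (pscal (-1) d)) with (pdot d d)
    by (unfold pdot, pscal; cbn; ring).
  set (t := -2 * pdot (x1, x2) d / pdot d d).
  unfold padd, pscal; cbn [fst snd]. f_equal; ring.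
Qed.

Lemma P2_as_ptA_reflections (x : pt) :
  P2 x = pscal (-1) (second_intersection (pscal (-1) (second_intersection x ptA)) ptA).
Proof.
  unfold P2. set (y := second_intersection x ptA).
  replace ptB with (pscal (-1) ptA) by (unfold ptA, ptB, pscal; cbn; f_equal; ring).
  rewrite <- second_intersection_opp. f_equal.
  destruct y; unfold pscal; cbn [fst snd]; f_equal; ring.
Qed.

Lemma second_intersection_ptA_approx (r : R) (x : pt) :
  2 <= r -> pnorm x = r ->
  supnorm (psub (second_intersection x ptA)
                (padd (pscal (-1) x) (pscal (-1/2) (Ycircle r x)))) <= 28 / r.
Proof.
  intros Hr Hx.
  pose proof (pnorm_sqr x) as Hsq. rewrite Hx in Hsq.
  destruct x as [x1 x2]; cbn [fst snd] in Hsq.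
  assert (B1 : - r <= x1 <= r) by nra.
  assert (B2 : - r <= x2 <= r) by nra.
  set (D := 1 + 2 * x1 + r ^ 2).
  (* D = |x - A|^2 >= (r - 1)^2 *)
  assert (HD : r ^ 2 / 4 <= D) by (unfold D; nra).
  assert (HDr : 7 * r ^ 3 <= 28 / r * (D * r ^ 2)).
  { replace (28 / r * (D * r ^ 2)) with (28 * D * r) by (field; lra). nra. }
  assert (Hpos : 0 < D * r ^ 2) by (apply Rmult_lt_0_compat; nra).
  unfold second_intersection, padd, pscal, psub, pdot, ptA, Ycircle; cbn [fst snd].
  replace (x1 * (-1 - x1) + x2 * (0 - x2)) with (- x1 - r ^ 2) by nra.
  replace ((-1 - x1) * (-1 - x1) + (0 - x2) * (0 - x2)) with D by (unfold D; nra).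
  replace (x2 ^ 2) with (r ^ 2 - x1 ^ 2) by nra.
  assert (HD0 : D <> 0) by nra.
  apply supnorm_le; cbn [fst snd].
  - match goal with |- Rabs ?e <= _ =>
      replace e with (2 * (r ^ 2 - x1 ^ 2) * (1 + 2 * x1) / (D * r ^ 2))
        by (unfold D in *; field; split; lra) end.
    apply Rabs_div_le; [exact Hpos|].
    apply Rabs_le. nra.
  - match goal with |- Rabs ?e <= _ =>
      replace e with (2 * x2 * (r ^ 2 - x1 - 2 * x1 ^ 2) / (D * r ^ 2))
        by (unfold D in *; field; split; lra) end.
    apply Rabs_div_le; [exact Hpos|].
    apply Rabs_le. nra.
Qed.

Lemma P2_approx (r : R) (x : pt) :
  2 <= r -> pnorm x = r ->
  supnorm (psub (P2 x) (padd x (Ycircle r x))) <= 120 / r.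
Proof.
  intros Hr Hx.
  assert (HAx : ptA <> x) by (intro E; rewrite <- E, pnorm_ptA in Hx; lra).
  rewrite P2_as_ptA_reflections.
  set (y := second_intersection x ptA).
  set (z := pscal (-1) y).
  assert (Hz : pnorm z = r)
    by (unfold z, y; rewrite pnorm_opp, pnorm_second_intersection; assumption).
  pose proof (second_intersection_ptA_approx r x Hr Hx) as Ey. fold y in Ey.
  pose proof (second_intersection_ptA_approx r z Hr Hz) as Ez.
  pose proof (Ycircle_bound r x ltac:(lra) ltac:(rewrite <- Hx; apply supnorm_le_pnorm)) as Qx.
  assert (Hzx : supnorm (psub z x) <= 16).
  { assert (28 / r <= 14) by (apply Rle_div_l; lra).
    apply supnorm_le_iff in Ey, Qx. apply supnorm_le_iff.
    unfold z; unfold psub, padd, pscal in *; cbn [fst snd] in *. lra. }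
  pose proof (Ycircle_lipschitz r z x ltac:(lra)
    ltac:(rewrite <- Hz; apply supnorm_le_pnorm) ltac:(rewrite <- Hx; apply supnorm_le_pnorm)) as L.
  assert (8 / r * supnorm (psub z x) <= 8 / r * 16)
    by (apply Rmult_le_compat_l; [apply Rlt_le, Rdiv_lt_0_compat|]; lra).
  replace (120 / r) with (28 / r + 28 / r + / 2 * (8 / r * 16)) by (field; lra).
  apply supnorm_le_iff in Ey, Ez, L. apply supnorm_le_iff.
  unfold z in *; unfold psub, padd, pscal in *; cbn [fst snd] in *. lra.
Qed.

Lemma pdot_Yfield (p : pt) : pdot p (Yfield p) = 0.
Proof. unfold Yfield, pdot, pscal, d_alpha; cbn [fst snd]; ring. Qed.

Lemma integral_curve_pnorm_const (V : pt -> pt) (g1 g2 : R -> R) :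
  (forall p, pdot p (V p) = 0) -> integral_curve V g1 g2 ->
  forall t, pnorm (g1 t, g2 t) = pnorm (g1 0, g2 0).
Proof.
  intros HV Hg t. unfold pnorm. f_equal.
  set (f := fun s => pdot (g1 s, g2 s) (g1 s, g2 s)).
  assert (Df : forall s, derivable_pt_lim f s 0).
  { intro s. destruct (Hg s) as [D1 D2].
    pose proof (derivable_pt_lim_plus _ _ _ _ _
      (derivable_pt_lim_mult _ _ _ _ _ D1 D1) (derivable_pt_lim_mult _ _ _ _ _ D2 D2)) as D.
    specialize (HV (g1 s, g2 s)). unfold pdot in HV; cbn [fst snd] in HV.
    match type of D with derivable_pt_lim _ _ ?l => replace 0 with l by lra end.
    exact D. }
  destruct (MVT_abs f (fun _ => 0) 0 t (fun c _ => Df c)) as [c [Hc _]].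
  destruct (Req_dec (f t) (f 0)) as [E | E]; [exact E |].
  exfalso. apply (Rabs_no_R0 (f t - f 0)); [lra | rewrite Hc, Rabs_R0; ring].
Qed.

Lemma supnorm_increment_le (g1 g2 d1 d2 : R -> R) (a b M : R) :
  a <= b ->
  (forall t, derivable_pt_lim g1 t (d1 t) /\ derivable_pt_lim g2 t (d2 t)) ->
  (forall t, a <= t <= b -> supnorm (d1 t, d2 t) <= M) ->
  supnorm (psub (g1 b, g2 b) (g1 a, g2 a)) <= M * (b - a).
Proof.
  intros Hab Hd HM.
  assert (Hmin : Rmin a b = a) by (apply Rmin_left; lra).
  assert (Hmax : Rmax a b = b) by (apply Rmax_right; lra).
  assert (Comp : forall g d : R -> R, (forall t, derivable_pt_lim g t (d t)) ->
            (forall t, a <= t <= b -> Rabs (d t) <= M) -> Rabs (g b - g a) <= M * (b - a)).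
  { intros g d Hg Hb.
    destruct (MVT_abs g d a b (fun c _ => Hg c)) as [c [Hc Hcab]].
    rewrite Hmin, Hmax in Hcab. rewrite Hc, (Rabs_right (b - a)) by lra.
    apply Rmult_le_compat_r; [lra | exact (Hb c Hcab)]. }
  apply supnorm_le; cbn [psub fst snd].
  - apply (Comp g1 d1); [intro t; apply Hd |].
    intros t Ht. eapply Rle_trans; [| exact (HM t Ht)]. apply (Rabs_fst_le_supnorm (d1 t, d2 t)).
  - apply (Comp g2 d2); [intro t; apply Hd |].
    intros t Ht. eapply Rle_trans; [| exact (HM t Ht)]. apply (Rabs_snd_le_supnorm (d1 t, d2 t)).
Qed.

Lemma integral_curve_Yfield_approx (r : R) (x : pt) (g1 g2 : R -> R) :
  0 < r -> pnorm x = r -> g1 0 = fst x -> g2 0 = snd x ->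
  integral_curve Yfield g1 g2 ->
  supnorm (psub (g1 1, g2 1) (padd x (Ycircle r x))) <= 32 / r.
Proof.
  intros Hr Hx H1 H2 Hg.
  assert (Hx0 : x = (g1 0, g2 0)) by (rewrite H1, H2; apply surjective_pairing).
  assert (Hon : forall t, pnorm (g1 t, g2 t) = r).
  { intro t. rewrite <- Hx, Hx0.
    exact (integral_curve_pnorm_const Yfield g1 g2 pdot_Yfield Hg t). }
  assert (Hin : forall t, supnorm (g1 t, g2 t) <= r)
    by (intro t; rewrite <- (Hon t); apply supnorm_le_pnorm).
  assert (HY : forall t, Yfield (g1 t, g2 t) = Ycircle r (g1 t, g2 t))
    by (intro t; apply Yfield_circle; auto).
  set (v1 := fun s => fst (Yfield (g1 s, g2 s))).
  set (v2 := fun s => snd (Yfield (g1 s, g2 s))).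
  assert (Hspeed : forall t, supnorm (v1 t, v2 t) <= 4).
  { intro t. unfold v1, v2. rewrite <- surjective_pairing, HY. apply Ycircle_bound; auto. }
  assert (Hdrift : forall t, 0 <= t <= 1 -> supnorm (psub (g1 t, g2 t) x) <= 4).
  { intros t Ht. rewrite Hx0.
    eapply Rle_trans; [apply (supnorm_increment_le g1 g2 v1 v2 0 t 4) | nra];
      [lra | exact Hg | intros; apply Hspeed]. }
  set (c := Ycircle r x).
  replace (psub (g1 1, g2 1) (padd x c))
    with (psub ((g1 - mult_real_fct (fst c) id)%F 1, (g2 - mult_real_fct (snd c) id)%F 1)
               ((g1 - mult_real_fct (fst c) id)%F 0, (g2 - mult_real_fct (snd c) id)%F 0))
    by (rewrite Hx0; unfold psub, padd, minus_fct, mult_real_fct, id; cbn [fst snd]; f_equal; ring).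
  replace (32 / r) with (32 / r * (1 - 0)) by ring.
  apply supnorm_increment_le with (fun s => v1 s - fst c * 1) (fun s => v2 s - snd c * 1); [lra | |].
  - intro t. split; apply derivable_pt_lim_minus; try apply derivable_pt_lim_scal;
      try apply derivable_pt_lim_id; apply Hg.
  - intros t Ht.
    replace (v1 t - fst c * 1, v2 t - snd c * 1) with (psub (Ycircle r (g1 t, g2 t)) c)
      by (unfold v1, v2, psub; rewrite HY; cbn [fst snd]; f_equal; ring).
    eapply Rle_trans; [apply Ycircle_lipschitz; auto |].
    + rewrite <- Hx; apply supnorm_le_pnorm.
    + replace (32 / r) with (8 / r * 4) by (field; lra).
      apply Rmult_le_compat_l; [apply Rlt_le, Rdiv_lt_0_compat; lra | exact (Hdrift t Ht)].
Qed.

Theorem corollary4p14 :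
  exists R0 C5 : R,
    forall x : pt, 1 < pnorm x -> R0 <= pnorm x ->
      forall g1 g2 : R -> R,
        g1 0 = fst x -> g2 0 = snd x -> integral_curve Yfield g1 g2 ->
        pnorm (psub (P2 x) (g1 1, g2 1)) <= C5 / pnorm x.
Proof.
  exists 2, 304.
  intros x _ Hr g1 g2 H1 H2 Hg.
  set (r := pnorm x) in *.
  pose proof (P2_approx r x Hr eq_refl) as HP.
  pose proof (integral_curve_Yfield_approx r x g1 g2 ltac:(lra) eq_refl H1 H2 Hg) as HF.
  pose proof (supnorm_psub_triangle (P2 x) (g1 1, g2 1) (padd x (Ycircle r x))) as T.
  rewrite (supnorm_psub_comm (padd x (Ycircle r x))) in T.
  eapply Rle_trans; [apply pnorm_le_2supnorm |].
  replace (304 / r) with (2 * (120 / r + 32 / r)) by (field; lra).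
  lra.
Qed.
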